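(* Let $r$ be a prime power, $q=r^2$, and let $M$ be a positive integer with $M\mid (r+1)$. Then there exists a matrix $A\in M_{M,M}(\mathbb{F}_q)$ such that $AA^\dagger$ is diagonal (indeed $AA^\dagger=MI_M$ with $M\neq 0$ in $\mathbb{F}_q$) and $\delta_i(A)=M-i+1$ for all $1\le i\le M$.
   Context: For $a\in\mathbb{F}_q$, $\overline{a}:=a^r$; for a matrix $A=[a_{ij}]$, $A^\dagger:=[\overline{a_{ji}}]$. For $A\in M_{s,l}(\mathbb{F}_q)$ and $1\le i\le s$, $\delta_i(A)$ denotes the minimum Hamming weight of the linear code of length $l$ over $\mathbb{F}_q$ generated by the first $i$ rows of $A$. *)

From HB Require Import structures.
From mathcomp Require Import all_boot all_order all_algebra all_field.
Set Implicit Arguments. Unset Strict Implicit. Unset Printing Implicit Defensive.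
Import GRing.Theory.
Local Open Scope ring_scope.

(* Conjugate transpose w.r.t. the involution a |-> a^r:  A^dagger = [ conj(a_ji) ]. *)
Definition cdag (F : finFieldType) (r : nat) (s l : nat) (A : 'M[F]_(s, l)) : 'M[F]_(l, s) :=
  \matrix_(i < l, j < s) (A j i) ^+ r.

Definition hwt (F : finFieldType) (l : nat) (c : 'rV[F]_l) : nat :=
  #|[set j : 'I_l | c 0 j != 0]|.

(* Matrix keeping the first i rows of A and zeroing the others; its row space
   is the linear code generated by the first i rows of A. *)
Definition first_rows (F : finFieldType) (s l : nat) (i : nat) (A : 'M[F]_(s, l)) : 'M[F]_(s, l) :=
  \matrix_(j < s) (if (j < i)%N then row j A else 0).

(* delta_i(A): minimum Hamming weight of a nonzero codeword of the code spanned
   by the first i rows of A.  (Convention: l.+1 if that code is {0}.) *)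
Definition delta (F : finFieldType) (s l : nat) (i : nat) (A : 'M[F]_(s, l)) : nat :=
  \big[minn/l.+1]_(c : 'rV[F]_l | (c <= first_rows i A)%MS && (c != 0)) hwt c.

From HB Require Import structures.
From mathcomp Require Import all_boot all_order all_algebra all_field zify.
From mathcomp Require Import cyclic.
Set Implicit Arguments.
Unset Strict Implicit.
Unset Printing Implicit Defensive.

Import Order.TTheory GRing.Theory.
Local Open Scope ring_scope.

(* Let w be a primitive M-th root of unity in F (it exists since M divides
   r + 1, hence r^2 - 1), and let A = [w^(ij)] be the Fourier matrix.  As
   w^(r+1) = 1, the involution a |-> a^r maps w^k to w^-k, so the geometric
   sum identity makes the rows of A orthogonal, with A A^dagger = M I; and
   M != 0 in F merely because F has a primitive M-th root of unity.  The first i rows of A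
   span the Reed-Solomon code of evaluations at the M distinct points w^j of
   the polynomials of degree < i: a nonzero one has at most i - 1 roots, and
   the product of the X - w^l, l < i - 1, attains that bound. *)

Lemma finField_prim_root_exists (F : finFieldType) n :
  (0 < n)%N -> (n %| #|F|.-1)%N -> exists w : F, n.-primitive_root w.
Proof.
move=> n_gt0 n_dvd; have q_gt1 : (1 < #|F|)%N := finNzRing_gt1 F.
have : has #|F|.-1.-primitive_root (enum (predC1 (0 : F))).
  apply: has_prim_root; last by rewrite -cardE cardC1.
  - by rewrite -ltnS prednK // ltnW.
  - apply/allP => x; rewrite mem_enum !inE unity_rootE => x0.
    by rewrite -(inj_eq (mulIf x0)) mul1r -exprSr prednK ?expf_card // ltnW.
  - exact: enum_uniq.
case/hasP => g _ g_prim; exists (g ^+ (#|F|.-1 %/ n)); exact: dvdn_prim_root.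
Qed.

Lemma prim_root_expr_inj (R : nzRingType) n (z : R) :
  n.-primitive_root z -> injective (fun i : 'I_n => z ^+ i).
Proof.
move=> z_prim i j /eqP.
by rewrite (eq_prim_root_expr z_prim) !modn_small // => /eqP /val_inj.
Qed.

Lemma sum_expr_unity_root (R : idomainType) n (z : R) :
  z ^+ n = 1 -> z != 1 -> \sum_(k < n) z ^+ k = 0.
Proof.
move=> zn z1; apply/eqP; have := subrX1 z n.
by rewrite zn subrr => /esym/eqP; rewrite mulf_eq0 subr_eq0 (negPf z1).
Qed.

Lemma hwtE (F : finFieldType) l (c : 'rV[F]_l) :
  hwt c = #|~: [set j : 'I_l | c 0 j == 0]|.
Proof. by rewrite /hwt; congr #|pred_of_set _|; apply/setP => j; rewrite !inE. Qed.

Lemma delta_eq (F : finFieldType) s l i (A : 'M[F]_(s, l)) d :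
  (forall c, (c <= first_rows i A)%MS -> c != 0 -> (d <= hwt c)%N) ->
  (exists2 c, (c <= first_rows i A)%MS && (c != 0) & (hwt c <= d)%N) ->
  delta i A = d.
Proof.
move=> wt_ge [c c_code c_wt]; rewrite /delta -minEnat; apply/eqP; rewrite eqn_leq.
apply/andP; split.
  by apply: leq_trans c_wt; rewrite -leEnat; exact: bigmin_le_cond.
rewrite -leEnat; apply/bigmin_geP; split=> [|c' /andP [c'_sub c'0]]; last exact: wt_ge.
case/andP: c_code => c_sub c0; apply: leq_trans (wt_ge _ c_sub c0) _.
by apply: leqW; rewrite -[l in (_ <= l)%N]card_ord max_card.
Qed.

Lemma first_rowsE (F : finFieldType) s l i (A : 'M[F]_(s, l)) :
  first_rows i A = pid_mx i *m A.
Proof.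
apply/matrixP => j k; rewrite !mxE (bigD1 j) //= big1 => [|j' j'j]; last first.
  by rewrite mxE val_eqE eq_sym (negPf j'j) mul0r.
by rewrite mxE eqxx addr0; case: ifP; rewrite !mxE ?mul1r ?mul0r.
Qed.

Lemma mul_rV_pid_mxE (R : pzRingType) s i (u : 'rV[R]_s) (k : 'I_s) :
  (u *m pid_mx i) 0 k = if (k < i)%N then u 0 k else 0.
Proof.
rewrite !mxE (bigD1 k) //= big1 => [|k' k'k]; last first.
  by rewrite mxE val_eqE (negPf k'k) mulr0.
by rewrite mxE eqxx addr0; case: ifP; rewrite ?mulr1 ?mulr0.
Qed.

Lemma mul_rV_VandermondeE (R : comNzRingType) m n (a : 'rV[R]_n) (v : 'rV[R]_m) j :
  (v *m Vandermonde m a) 0 j = (rVpoly v).[a 0 j].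
Proof. by rewrite mxE horner_poly; apply: eq_bigr => k _; rewrite valK !mxE. Qed.

Lemma card_roots_lt_size (R : idomainType) n (a : 'I_n -> R) (p : {poly R}) :
  injective a -> p != 0 -> (#|[set j | root p (a j)]| < size p)%N.
Proof.
move=> a_inj p0; rewrite cardE -(size_map a); apply: max_poly_roots p0 _ _.
  by apply/allP => x /mapP [j]; rewrite mem_enum inE => pj ->.
by rewrite map_inj_uniq ?enum_uniq.
Qed.

Section VandermondeCode.

Variables (F : finFieldType) (m n : nat) (a : 'rV[F]_n).
Hypothesis a_inj : injective (a 0).
Local Notation V := (Vandermonde m a).

Lemma hwt_mul_Vandermonde (v : 'rV[F]_m) :
  hwt (v *m V) = #|~: [set j | root (rVpoly v) (a 0 j)]|.
Proof.
rewrite hwtE; congr #|pred_of_set (~: _)|.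
by apply/setP => j; rewrite !inE mul_rV_VandermondeE.
Qed.

Lemma Vandermonde_codeword_hwt_ge i c : (i <= n)%N ->
  (c <= first_rows i V)%MS -> c != 0 -> (n - i + 1 <= hwt c)%N.
Proof.
move=> i_le_n; rewrite first_rowsE => /submxP [u ->].
rewrite mulmxA; set v := u *m pid_mx i => c0.
have size_v : (size (rVpoly v) <= i)%N.
  apply/leq_sizeP => k ik; rewrite coef_rVpoly; case: insubP => // k' _ k'k.
  by rewrite mul_rV_pid_mxE k'k ltnNge ik.
have v0 : rVpoly v != 0.
  apply: contraNneq c0 => v0; apply/eqP/rowP => j.
  by rewrite mul_rV_VandermondeE v0 horner0 mxE.
have := card_roots_lt_size a_inj v0.
have := cardsC [set j | root (rVpoly v) (a 0 j)].
rewrite hwt_mul_Vandermonde card_ord.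
(* lia treats convertible but differently elaborated cardinals as distinct atoms. *)
by move: #|_| #|~: _| (size _) size_v => z nz s; lia.
Qed.

Lemma exists_Vandermonde_codeword_hwt_le i :
  (0 < i)%N -> (i <= m)%N -> (i <= n)%N ->
  exists2 c, (c <= first_rows i V)%MS && (c != 0) & (hwt c <= n - i + 1)%N.
Proof.
move=> i_gt0 im i_le_n; have i1n : (i.-1 <= n)%N by rewrite (leq_trans (leq_pred i)).
pose S := [set widen_ord i1n l | l : 'I_i.-1].
have card_S : #|S| = i.-1.
  by rewrite card_imset ?card_ord // => l l' /(congr1 val) /= /val_inj.
pose f := \prod_(x <- [seq a 0 j | j <- enum S]) ('X - x%:P).
have size_f : size f = i by rewrite size_prod_XsubC size_map -cardE card_S prednK.
have f0 : f != 0 by rewrite -size_poly_gt0 size_f.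
pose v : 'rV[F]_m := poly_rV f.
have fv : rVpoly v = f by rewrite poly_rV_K ?size_f.
have v_pid : v *m pid_mx i = v.
  apply/rowP => k; rewrite mul_rV_pid_mxE; case: ltnP => // ik.
  by rewrite mxE nth_default ?size_f.
have S_roots : S \subset [set j | root f (a 0 j)].
  by apply/subsetP => j Sj; rewrite inE root_prod_XsubC map_f ?mem_enum.
exists (v *m V).
  apply/andP; split; first by rewrite first_rowsE -v_pid -mulmxA submxMl.
  apply/eqP => c0; have := card_roots_lt_size a_inj f0.
  have -> : [set j | root f (a 0 j)] = setT.
    by apply/setP => j; rewrite -fv !inE rootE -mul_rV_VandermondeE c0 mxE eqxx.
  by rewrite cardsT card_ord size_f ltnNge i_le_n.
have := subset_leq_card S_roots; have := cardsC [set j | root f (a 0 j)].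
rewrite hwt_mul_Vandermonde fv card_ord card_S; move: #|_| #|~: _| => z nz; lia.
Qed.

Lemma delta_Vandermonde i :
  (0 < i)%N -> (i <= m)%N -> (i <= n)%N -> delta i V = (n - i + 1)%N.
Proof.
move=> i_gt0 im i_le_n; apply: delta_eq.
  by move=> c; apply: Vandermonde_codeword_hwt_ge.
exact: exists_Vandermonde_codeword_hwt_le.
Qed.

End VandermondeCode.

Definition dft_mx (R : pzRingType) n (w : R) : 'M[R]_n :=
  Vandermonde n (\row_(j < n) w ^+ j).

Lemma dft_mul_cdag (F : finFieldType) r M (w : F) :
  M.-primitive_root w -> (M %| r.+1)%N ->
  dft_mx M w *m cdag r (dft_mx M w) = M%:R%:M.
Proof.
move=> w_prim M_dvd; apply/matrixP => i j; rewrite !mxE.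
set z := w ^+ i * w ^+ j ^+ r.
have -> : \sum_k dft_mx M w i k * cdag r (dft_mx M w) k j = \sum_(k < M) z ^+ k.
  apply: eq_bigr => k _; rewrite !mxE exprMn exprAC.
  by rewrite [(w ^+ j ^+ r) ^+ k]exprAC [w ^+ j ^+ k]exprAC.
have wM k : w ^+ k ^+ M = 1 by rewrite exprAC (prim_expr_order w_prim) expr1n.
have zM : z ^+ M = 1 by rewrite exprMn [_ ^+ r ^+ M]exprAC !wM expr1n mulr1.
have wr1 : w ^+ r.+1 = 1 by apply/eqP; rewrite -(prim_order_dvd w_prim).
have z_wj : z * w ^+ j = w ^+ i by rewrite -mulrA -exprSr exprAC wr1 expr1n mulr1.
case: (eqVneq i j) => [ij|ij].
  have wj0 : w ^+ j != 0.
    by rewrite expf_neq0 // (prim_root_eq0 w_prim) -lt0n (prim_order_gt0 w_prim).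
  have -> : z = 1 by apply: (mulIf wj0); rewrite mul1r z_wj ij.
  by rewrite mulr1n (eq_bigr (fun=> 1)) ?sumr_const ?card_ord // => k _; rewrite expr1n.
rewrite sum_expr_unity_root //; apply: contra_neq ij => z1.
by apply: (prim_root_expr_inj w_prim); rewrite -z_wj z1 mul1r.
Qed.

Theorem lemma4p2 (F : finFieldType) (r : nat)
  (hr : exists p k : nat, [/\ prime p, (0 < k)%N & r = (p ^ k)%N])
  (hF : #|F| = (r ^ 2)%N)
  (M : nat) (hM : (0 < M)%N) (hMr : (M %| r.+1)%N) :
  exists A : 'M[F]_(M, M),
    [/\ is_diag_mx (A *m cdag r A),
        A *m cdag r A = (M%:R : F)%:M,
        (M%:R : F) != 0
      & forall i : nat, (1 <= i <= M)%N -> delta i A = (M - i + 1)%N].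
Proof.
have M_dvd_q1 : (M %| #|F|.-1)%N.
  by rewrite hF -subn1 -{2}(exp1n 2) subn_sqr addn1 dvdn_mull.
have [w w_prim] := finField_prim_root_exists hM M_dvd_q1.
have dft_unitary := dft_mul_cdag w_prim hMr.
exists (dft_mx M w); split.
- by rewrite dft_unitary scalar_mx_is_diag.
- exact: dft_unitary.
- exact: prim_root_natf_neq0 w_prim.
- move=> i /andP [i_gt0 iM]; apply: delta_Vandermonde => //.
  by move=> j k; rewrite !mxE; apply: prim_root_expr_inj.
Qed.
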